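(* Let $M=((W,\preccurlyeq),V)$ be an intuitionistic model, $T\subseteq\mathbb{P}$ and $w\in W$ such that (1) $\{v\in W\mid w\preccurlyeq v\}$ has a unique maximal world $u$, and (2) $V(v)=T$ for all $v\in W$ with $w\preccurlyeq v$ and $v\ne w$. Then there exist an HT model $M'=((\{0,1\},\preccurlyeq'),V')$ and a bisimulation $Z\subseteq W\times\{0,1\}$ with $w\,Z\,0$.
   Context: Propositional intuitionistic Kripke semantics over a countable atom set $\mathbb{P}$: an intuitionistic model is $((W,\preccurlyeq),V)$ with $W\ne\emptyset$, $\preccurlyeq$ a partial order and $V:W\to2^{\mathbb{P}}$ monotone along $\preccurlyeq$. A world is maximal if no distinct world lies $\preccurlyeq$-above it. An HT model is an intuitionistic model on the frame $(\{0,1\},\preccurlyeq')$ with $\preccurlyeq'=\{(0,0),(1,1),(0,1)\}$. A bisimulation between $M_1=((W_1,\preccurlyeq_1),V_1)$ and $M_2=((W_2,\preccurlyeq_2),V_2)$ is a relation $Z\subseteq W_1\times W_2$ such that whenever $w_1Zw_2$: (C1) $V_1(w_1)=V_2(w_2)$; (C2) for every $v_1\succcurlyeq_1 w_1$ there is $v_2\succcurlyeq_2w_2$ with $v_1Zv_2$; (C3) for every $v_2\succcurlyeq_2w_2$ there is $v_1\succcurlyeq_1w_1$ with $v_1Zv_2$. *)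

From mathcomp Require Import all_boot.
Set Implicit Arguments.
Unset Strict Implicit.
Unset Printing Implicit Defensive.

Definition is_partial_order (W : Type) (le : W -> W -> Prop) : Prop :=
  (forall w, le w w) /\
  (forall u v w, le u v -> le v w -> le u w) /\
  (forall u v, le u v -> le v u -> u = v).

Definition is_imodel (P W : Type) (le : W -> W -> Prop) (V : W -> P -> Prop) : Prop :=
  inhabited W /\ is_partial_order le /\
  (forall w v, le w v -> forall p, V w p -> V v p).

Definition maximal (W : Type) (le : W -> W -> Prop) (u : W) : Prop :=
  forall v, le u v -> v = u.

(* HT frame ({0,1}, <=') with 0 := false, 1 := true; <=' = {(0,0),(1,1),(0,1)}. *)
Definition leHT (a b : bool) : Prop :=
  (a = false /\ b = false) \/ (a = true /\ b = true) \/ (a = false /\ b = true).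

Definition bisimulation (P W1 W2 : Type)
  (le1 : W1 -> W1 -> Prop) (V1 : W1 -> P -> Prop)
  (le2 : W2 -> W2 -> Prop) (V2 : W2 -> P -> Prop)
  (Z : W1 -> W2 -> Prop) : Prop :=
  forall w1 w2, Z w1 w2 ->
    V1 w1 = V2 w2 /\
    (forall v1, le1 w1 v1 -> exists v2, le2 w2 v2 /\ Z v1 v2) /\
    (forall v2, le2 w2 v2 -> exists v1, le1 w1 v1 /\ Z v1 v2).

From mathcomp Require Import all_boot.
From Stdlib Require Import Classical.

Set Implicit Arguments.
Unset Strict Implicit.

(* If w is maximal, its cone is the single world w and is bisimilar to the HT
   model with the same valuation at both worlds.  Otherwise w is related to 0,
   every world strictly above w to 1, and 1 carries the valuation T shared by
   all of them. *)

Lemma leHT_partial_order : is_partial_order leHT.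
Proof.
rewrite /leHT; split; first by case; tauto.
by split=> [[] [] [] | [] []]; intuition congruence.
Qed.

Lemma leHT0 (b : bool) : leHT false b.
Proof. by rewrite /leHT; case: b; tauto. Qed.

Lemma leHT1 (b : bool) : leHT true b -> b = true.
Proof. by rewrite /leHT; intuition congruence. Qed.

Lemma HT_imodel (P : Type) (V' : bool -> P -> Prop) :
  (forall p, V' false p -> V' true p) -> is_imodel leHT V'.
Proof.
move=> V'01; split; first exact: inhabits true.
split; first exact: leHT_partial_order.
by move=> [] [] /=; rewrite /leHT; intuition congruence.
Qed.

Section ConeBisimulation.

Variables (P W : Type) (le : W -> W -> Prop) (V : W -> P -> Prop) (w : W).
Hypothesis le_refl : forall v, le v v.

Lemma bisimulation_maximal :
  maximal le w -> bisimulation le V leHT (fun _ => V w) (fun v _ => v = w).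
Proof.
move=> maxw _ b -> /=; split=> //; split=> [v wv | c _].
- by exists b; split; [case: b; rewrite /leHT; tauto | exact: maxw].
- by exists w.
Qed.

Definition strict_cone_rel (v : W) (b : bool) : Prop :=
  if b then le w v /\ v <> w else v = w.

Hypothesis le_trans : forall u v x, le u v -> le v x -> le u x.
Hypothesis le_anti : forall u v, le u v -> le v u -> u = v.
Variable T : P -> Prop.
Hypothesis V_strict_cone : forall v, le w v -> v <> w -> V v = T.
Variables (s : W) (ws : le w s) (s_neq_w : s <> w).

Lemma bisimulation_strict_cone :
  bisimulation le V leHT (fun b : bool => if b then T else V w) strict_cone_rel.
Proof.
move=> v [] /=.
- move=> [wv vw]; split; first exact: V_strict_cone.
  split=> [x vx | b /leHT1 ->]; last by exists v.
  exists true; split; first by rewrite /leHT; tauto.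
  split; first exact: le_trans vx.
  by move=> xw; apply: vw; apply: le_anti => //; rewrite -xw.
- move=> ->; split=> //; split=> [x wx | [] _].
  + have [-> | xw] := classic (x = w); first by exists false; split=> //; exact: leHT0.
    by exists true; split; first exact: leHT0.
  + by exists s.
  + by exists w.
Qed.

End ConeBisimulation.

Theorem lemma2p7 (P : countType) (W : Type) (le : W -> W -> Prop)
  (V : W -> P -> Prop) (T : P -> Prop) (w : W) :
  is_imodel le V ->
  (exists u, le w u /\ maximal le u /\
     (forall u', le w u' -> maximal le u' -> u' = u)) ->
  (forall v, le w v -> v <> w -> V v = T) ->
  exists V' : bool -> P -> Prop, is_imodel leHT V' /\
  exists Z : W -> bool -> Prop, bisimulation le V leHT V' Z /\ Z w false.
Proof.
move=> [_ [[le_refl [le_trans le_anti]] V_mono]] _ V_strict_cone.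
have [[s [ws s_neq_w]] | no_strict] := classic (exists s, le w s /\ s <> w).
- exists (fun b : bool => if b then T else V w); split.
    apply: HT_imodel => p /=.
    by rewrite -(V_strict_cone s ws s_neq_w); exact: V_mono.
  exists (strict_cone_rel le w); split=> //.
  exact: bisimulation_strict_cone V_strict_cone s ws s_neq_w.
- have maxw : maximal le w.
    by move=> v wv; apply: NNPP => vw; apply: no_strict; exists v.
  exists (fun _ => V w); split; first exact: HT_imodel.
  by exists (fun v _ => v = w); split; first exact: bisimulation_maximal.
Qed.
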